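(* Let $(G,u,v,\alpha,\beta)$ be a Guvab with $\lim_{k\to\infty}W_k=0$. Then $\{W_k\}$ is eventually constant if and only if one of the following holds: (1) $\alpha=\beta=0$ and $N(u)=N(v)$; (2) $\alpha=\beta=\frac{1}{\deg u+1}$, $\{u,v\}\in E(G)$, and in the graph obtained by removing the edge $\{u,v\}$ from $G$, the vertices $u$ and $v$ have the same neighbor set; (3) $\alpha=\beta$ and $u=v$.
   Context: A Guvab is a tuple $(G,u,v,\alpha,\beta)$ where $G$ is a finite, connected, simple graph, $u,v\in V(G)$, and $\alpha,\beta\in[0,1]$ with $\alpha\le\beta$. A random walk on $G$ with starting vertex $w$ and laziness $\gamma$ is the Markov chain $R_0=w$ and, for $i\ge1$, $R_i=R_{i-1}$ with probability $\gamma$ and $R_i=t$ with probability $\frac{1-\gamma}{\deg(R_{i-1})}$ for each neighbor $t$ of $R_{i-1}$. $\mu_k$ is the distribution after $k$ steps of the walk from $u$ with laziness $\alpha$, $\nu_k$ that of the walk from $v$ with laziness $\beta$, and $W_k=W(\mu_k,\nu_k)$ is the Wasserstein ($L^1$ optimal transport) distance with respect to the graph distance. $N(w)$ is the neighbor set of $w$. A sequence $\{S_i\}$ is eventually constant if there is $N$ with $S_k=S_N$ for all $k\ge N$. *)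

From HB Require Import structures.
From mathcomp Require Import all_boot all_order all_algebra.
From mathcomp Require Import all_classical all_reals all_analysis.
Set Implicit Arguments. Unset Strict Implicit. Unset Printing Implicit Defensive.
Import Order.TTheory GRing.Theory Num.Theory.
Local Open Scope ring_scope.
Local Open Scope classical_set_scope.

Section Guvab.
Variables (T : finType) (e : rel T).

Definition simple_graph := symmetric e /\ irreflexive e.
Definition connected_graph := forall x y : T, connect e x y.

Definition nbhd (x : T) : {set T} := [set y | e x y].
Definition deg (x : T) : nat := #|nbhd x|.

Fixpoint within (n : nat) (x y : T) : bool :=
  match n with
  | 0 => x == y
  | n'.+1 => within n' x y || [exists z, within n' x z && e z y]
  end.

(* graph distance: least n with a walk of length n (< #|T| in a connected graph) *)
Definition gdist (x y : T) : nat := find (fun n => within n x y) (iota 0 #|T|).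

Variable R : realType.

Definition trans (g : R) (x y : T) : R :=
  if x == y then g else if e x y then (1 - g) / (deg x)%:R else 0.

Fixpoint walk_dist (g : R) (w : T) (k : nat) : T -> R :=
  match k with
  | 0 => fun x => (x == w)%:R
  | k'.+1 => fun y => \sum_(x : T) walk_dist g w k' x * trans g x y
  end.

Definition coupling (mu nu : T -> R) (pi : T -> T -> R) : Prop :=
  [/\ forall x y, 0 <= pi x y,
      forall x, \sum_(y : T) pi x y = mu x
    & forall y, \sum_(x : T) pi x y = nu y].

Definition wasserstein (mu nu : T -> R) : R :=
  inf [set c : R | exists pi, coupling mu nu pi /\
         c = \sum_(x : T) \sum_(y : T) pi x y * (gdist x y)%:R].

Definition W (u v : T) (a b : R) (k : nat) : R :=
  wasserstein (walk_dist a u k) (walk_dist b v k).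

Definition eventually_constant (s : nat -> R) : Prop :=
  exists N, forall k, (N <= k)%N -> s k = s N.

End Guvab.

From HB Require Import structures.
From mathcomp Require Import all_boot all_order all_algebra.
From mathcomp Require Import all_classical all_reals all_analysis.
From mathcomp Require Import ring lra.
Import Order.TTheory GRing.Theory Num.Theory.
Local Open Scope classical_set_scope.
Local Open Scope ring_scope.
Set Implicit Arguments. Unset Strict Implicit. Unset Printing Implicit Defensive.

(* Since W_k -> 0, an eventually constant sequence W_k vanishes from some N
   on, and W_k = 0 exactly when the two distributions coincide.  The lazy
   walk operator P is self-adjoint for the inner product weighted by 1/deg,
   so P^2 f = 0 forces P f = 0: two walks with the same laziness that meet at
   some time already agree after one step, i.e. the rows of P at u and v
   coincide, which happens exactly in the three listed configurations.  Walks
   with laziness a < b that agree at two consecutive times share a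
   distribution m with P_a m = P_b m; then m is stationary for the simple
   walk, both walks equal m after one step, and comparing the rows of P_a at
   u and of P_b at v forces u ~ v and N(u) = {v}, whence a = b = 1/2. *)

Section EventuallyConstant.
Import numFieldNormedType.Exports.

Lemma eventually_constant_cvg0 (R : realType) (s : nat -> R) N :
  s @ \oo --> 0 -> (forall k, (N <= k)%N -> s k = s N) -> s N = 0.
Proof.
move=> s_cvg0 s_const; have s_cvgN : s @ \oo --> s N.
  by apply: cvg_near_cst; exists N => // k; exact: s_const.
exact: cvg_unique s_cvgN s_cvg0.
Qed.

End EventuallyConstant.

Lemma connected_deg_gt0 (T : finType) (e : rel T) x :
  connected_graph e -> (1 < #|T|)%N -> (0 < deg e x)%N.
Proof.
move=> e_conn /card_gt1P [y1 [y2 [_ _ y12]]].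
have [y yx] : exists y, y != x.
  by case: (eqVneq y1 x) => [<-|]; [exists y2; rewrite eq_sym | exists y1].
case/connectP: (e_conn x y) => -[/= _ xy|z p /= /andP [exz _] _].
  by rewrite xy eqxx in yx.
by rewrite /deg card_gt0; apply/set0Pn; exists z; rewrite inE.
Qed.

Section Wasserstein.
Variables (R : realType) (T : finType) (e : rel T).

Lemma gdist_eq0 x y : (gdist e x y == 0)%N = (x == y).
Proof.
rewrite /gdist; have : (0 < #|T|)%N by apply/card_gt0P; exists x.
by case: #|T| => [|n] //= _; case: (x == y).
Qed.

Lemma gdistxx x : gdist e x x = 0%N.
Proof. by apply/eqP; rewrite gdist_eq0. Qed.

Definition transport_cost (pi : T -> T -> R) : R :=
  \sum_(x : T) \sum_(y : T) pi x y * (gdist e x y)%:R.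

Definition is_distribution (mu : T -> R) : Prop :=
  (forall x, 0 <= mu x) /\ \sum_x mu x = 1.

Lemma transport_cost_ge0 pi : (forall x y, 0 <= pi x y) -> 0 <= transport_cost pi.
Proof. by move=> pi_ge0; do 2!apply: sumr_ge0 => ? _; rewrite mulr_ge0. Qed.

Lemma coupling_cost_ge (mu nu : T -> R) pi x :
  coupling mu nu pi -> mu x - nu x <= transport_cost pi.
Proof.
case=> pi_ge0 pi_mu pi_nu; rewrite -pi_mu -pi_nu.
rewrite (bigD1 x) //= [X in _ - X](bigD1 x) //= addrC addrKA.
have row_le : \sum_(y | y != x) pi x y <= \sum_y pi x y * (gdist e x y)%:R.
  rewrite [leRHS](bigD1 x) //= gdistxx mulr0 add0r.
  apply: ler_sum => y yx; rewrite ler_peMr // ler1n lt0n gdist_eq0 eq_sym.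
  exact: yx.
have cost_ge_row : \sum_y pi x y * (gdist e x y)%:R <= transport_cost pi.
  rewrite [leRHS](bigD1 x) //= lerDl.
  by do 2!apply: sumr_ge0 => ? _; rewrite mulr_ge0.
rewrite lerBlDr; apply: le_trans (le_trans row_le cost_ge_row) _.
by rewrite lerDl sumr_ge0.
Qed.

Lemma wasserstein_ge (mu nu : T -> R) x :
  is_distribution mu -> is_distribution nu -> mu x - nu x <= wasserstein e mu nu.
Proof.
move=> [mu_ge0 mu1] [nu_ge0 nu1].
apply: lb_le_inf => [|_ [pi [pi_coupling ->]]]; last exact: coupling_cost_ge.
exists (transport_cost (fun x y => mu x * nu y)), (fun x y => mu x * nu y).
split=> //; split=> [y z|y|z]; first by rewrite mulr_ge0.
  by rewrite -mulr_sumr nu1 mulr1.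
by rewrite -mulr_suml mu1 mul1r.
Qed.

Lemma wasserstein_eq0 (mu nu : T -> R) :
  is_distribution mu -> is_distribution nu -> wasserstein e mu nu = 0 -> mu = nu.
Proof.
move=> mu_distr nu_distr W0.
have le_mu_nu x : 0 <= nu x - mu x.
  by rewrite subr_ge0 -subr_le0 -W0 wasserstein_ge.
have sum0 : \sum_x (nu x - mu x) = 0 by rewrite sumrB nu_distr.2 mu_distr.2 subrr.
apply: funext => x; apply/eqP; rewrite eq_sym -subr_eq0.
by rewrite (psumr_eq0P (fun y _ => le_mu_nu y) sum0).
Qed.

Lemma wasserstein_xx (mu : T -> R) : (forall x, 0 <= mu x) -> wasserstein e mu mu = 0.
Proof.
move=> mu_ge0; rewrite /wasserstein; set S := [set c | _].
have S0 : S 0.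
  exists (fun x y => (x == y)%:R * mu x); split.
    split=> [x y|x|y]; first by rewrite mulr_ge0.
      rewrite (bigD1 x) //= eqxx mul1r big1 ?addr0 // => y.
      by rewrite eq_sym => /negbTE ->; rewrite mul0r.
    rewrite (bigD1 y) //= eqxx mul1r big1 ?addr0 // => x.
    by move=> /negbTE ->; rewrite mul0r.
  rewrite big1 // => x _; rewrite big1 // => y _.
  by case: eqVneq => [->|]; rewrite ?gdistxx ?mulr0 ?mul0r.
have S_ge0 : lbound S 0.
  by move=> _ [pi [[pi_ge0 _ _] ->]]; exact: transport_cost_ge0.
have inf_le0 : inf S <= 0 by apply: ge_inf S0; exists 0.
by apply: le_anti; rewrite inf_le0 lb_le_inf //; exists 0.
Qed.

End Wasserstein.

Section LazyWalk.
Variables (R : realType) (T : finType) (e : rel T).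
Hypotheses (e_sym : symmetric e) (e_irr : irreflexive e).
Hypothesis deg_gt0 : forall x, (0 < deg e x)%N.

Definition walk_step (g : R) (f : T -> R) : T -> R :=
  fun y => \sum_x f x * trans e g x y.

Lemma walk_distE (g : R) w k :
  walk_dist e g w k = iter k (walk_step g) (fun x => (x == w)%:R).
Proof. by elim: k => //= k <-. Qed.

Lemma walk_step_point (g : R) w : walk_step g (fun x => (x == w)%:R) = trans e g w.
Proof.
apply: funext => y; rewrite /walk_step (bigD1 w) //= eqxx mul1r big1 ?addr0 //.
by move=> x /negbTE ->; rewrite mul0r.
Qed.

Lemma walk_stepB (g : R) (f h : T -> R) :
  walk_step g (f - h) = walk_step g f - walk_step g h.
Proof.
rewrite /walk_step !fctE; apply: funext => y.
by rewrite -sumrB; apply: eq_bigr => x _; rewrite mulrBl.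
Qed.

Lemma iter_walk_stepB (g : R) n (f h : T -> R) :
  iter n (walk_step g) (f - h) = iter n (walk_step g) f - iter n (walk_step g) h.
Proof. by elim: n => //= n ->; rewrite walk_stepB. Qed.

Lemma trans_ge0 (g : R) x y : 0 <= g <= 1 -> 0 <= trans e g x y.
Proof.
case/andP=> g_ge0 g_le1; rewrite /trans; case: (x == y) => //; case: (e x y) => //.
by rewrite divr_ge0 // subr_ge0.
Qed.

Lemma trans0E x y : trans e (0 : R) x y = if e x y then (deg e x)%:R^-1 else 0.
Proof. by rewrite /trans subr0 div1r; case: eqVneq => [->|]; rewrite ?e_irr. Qed.

Lemma transE (g : R) x y :
  trans e g x y = g * (x == y)%:R + (1 - g) * trans e (0 : R) x y.
Proof.
rewrite /trans subr0 div1r; case: (x == y); first by rewrite mulr1 mulr0 addr0.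
by case: (e x y); rewrite mulr0 add0r ?mulr0.
Qed.

Lemma sum_trans (g : R) x : \sum_y trans e g x y = 1.
Proof.
under eq_bigr do rewrite transE.
rewrite big_split /= -!mulr_sumr (bigD1 x) //= eqxx big1 => [|y]; last first.
  by rewrite eq_sym => /negbTE ->.
rewrite addr0 mulr1.
under eq_bigr do rewrite trans0E.
rewrite -big_mkcond /= sumr_const.
have -> : #|e x| = deg e x by rewrite /deg /nbhd cardsE.
rewrite -[_ *+ _]mulr_natr mulVf; first by rewrite mulr1 addrC subrK.
by rewrite pnatr_eq0 -lt0n deg_gt0.
Qed.

Lemma walk_dist_distribution (g : R) w k :
  0 <= g <= 1 -> is_distribution (walk_dist e g w k).
Proof.
move=> g01; split.
  elim: k => [|k IHk] y /=; first exact: ler0n.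
  by apply: sumr_ge0 => x _; rewrite mulr_ge0 ?trans_ge0.
elim: k => [|k IHk] /=.
  by rewrite (bigD1 w) //= eqxx big1 ?addr0 // => y /negbTE ->.
by rewrite exchange_big /= -{}IHk; apply: eq_bigr => x _; rewrite -mulr_sumr sum_trans mulr1.
Qed.

Lemma trans_reversible (g : R) x y :
  trans e g x y / (deg e y)%:R = trans e g y x / (deg e x)%:R.
Proof.
rewrite /trans eq_sym e_sym; case: eqVneq => [->//|_].
by case: (e y x); rewrite ?mul0r // mulrAC.
Qed.

(* Distributions are row vectors, so the reversible measure [deg] enters
   through its inverse. *)
Definition deg_dot (f h : T -> R) : R := \sum_y f y * h y / (deg e y)%:R.

Lemma deg_dot_walk_step (g : R) f h :
  deg_dot (walk_step g f) h = deg_dot f (walk_step g h).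
Proof.
rewrite /deg_dot /walk_step.
under eq_bigr do rewrite !mulr_suml.
rewrite exchange_big /=; apply: eq_bigr => x _.
rewrite mulr_sumr mulr_suml; apply: eq_bigr => y _.
transitivity (f x * h y * (trans e g x y / (deg e y)%:R)); first by ring.
by rewrite trans_reversible; ring.
Qed.

Lemma deg_dot_eq0 (h : T -> R) : deg_dot h h = 0 -> h = 0.
Proof.
have term_ge0 y : 0 <= h y * h y / (deg e y)%:R by rewrite divr_ge0 // -expr2 sqr_ge0.
move=> /(psumr_eq0P (fun y _ => term_ge0 y)) hh0; apply: funext => y.
move: (hh0 y isT) => /eqP; rewrite mulf_eq0 invr_eq0 pnatr_eq0 eqn0Ngt deg_gt0 orbF.
by rewrite mulf_eq0 orbb => /eqP.
Qed.

Lemma walk_step_sqr_eq0 (g : R) f :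
  walk_step g (walk_step g f) = 0 -> walk_step g f = 0.
Proof.
move=> sqr0; apply: deg_dot_eq0; rewrite deg_dot_walk_step sqr0.
by rewrite /deg_dot big1 // => y _; rewrite [0 y]/= mulr0 mul0r.
Qed.

Lemma iter_walk_step_eq0 (g : R) n f :
  iter n.+1 (walk_step g) f = 0 -> walk_step g f = 0.
Proof.
elim: n f => [//|n IHn] f; rewrite iterSr => /IHn; exact: walk_step_sqr_eq0.
Qed.

Lemma eq_iter_walk_step (g : R) n f h :
  iter n (walk_step g) f = iter n (walk_step g) h -> walk_step g f = walk_step g h.
Proof.
case: n => [/= -> //|n] /eqP; rewrite -subr_eq0 -iter_walk_stepB => /eqP.
by move=> /iter_walk_step_eq0 /eqP; rewrite walk_stepB subr_eq0 => /eqP.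
Qed.

Lemma walk_step_lazy (g : R) f y :
  walk_step g f y = g * f y + (1 - g) * walk_step 0 f y.
Proof.
rewrite /walk_step; under eq_bigr do rewrite transE mulrDr mulrCA [f _ * (_ * _)]mulrCA.
rewrite big_split /= -!mulr_sumr (bigD1 y) //= eqxx mulr1 big1 ?addr0 //.
by move=> x /negbTE ->; rewrite mulr0.
Qed.

Lemma walk_step_fixed (a b : R) m :
  a != b -> walk_step a m = walk_step b m -> forall g : R, walk_step g m = m.
Proof.
move=> ab step_ab.
have simple_fixed : walk_step 0 m = m.
  apply: funext => y; move/(congr1 (fun f => f y)): step_ab.
  rewrite (walk_step_lazy a) (walk_step_lazy b) => step_ab_y.
  have : (a - b) * (m y - walk_step 0 m y) = 0.
    by rewrite mulrBr !mulrBl; move: step_ab_y; lra.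
  by move/eqP; rewrite mulf_eq0 subr_eq0 (negbTE ab) subr_eq0 eq_sym => /eqP.
by move=> g; apply: funext => y; rewrite walk_step_lazy simple_fixed; ring.
Qed.

Lemma eq_walk_dist_trans (g : R) u v N :
  walk_dist e g u N = walk_dist e g v N -> trans e g u = trans e g v.
Proof. by rewrite !walk_distE => /eq_iter_walk_step; rewrite !walk_step_point. Qed.

Lemma eq_trans_walk_dist (g : R) u v k :
  trans e g u = trans e g v -> walk_dist e g u k.+1 = walk_dist e g v k.+1.
Proof. by rewrite !walk_distE !iterSr !walk_step_point => ->. Qed.

Lemma walk_dist_fixed (g : R) w m N :
  walk_step g m = m -> walk_dist e g w N = m -> trans e g w = m.
Proof.
move=> m_fixed; rewrite walk_distE -{1}(iter_fix N m_fixed) => /eq_iter_walk_step.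
by rewrite walk_step_point m_fixed.
Qed.

Lemma trans0_eq0 x y : (trans e (0 : R) x y == 0) = ~~ e x y.
Proof.
rewrite trans0E; case: (e x y); last by rewrite eqxx.
by rewrite invr_eq0 pnatr_eq0 eqn0Ngt deg_gt0.
Qed.

Lemma eq_nbhd_trans0 u v : nbhd e u = nbhd e v -> trans e (0 : R) u = trans e 0 v.
Proof.
move=> nbhd_uv; have deg_uv : deg e u = deg e v by rewrite /deg nbhd_uv.
apply: funext => y; rewrite !trans0E deg_uv.
by move/setP: nbhd_uv => /(_ y); rewrite !inE => ->.
Qed.

Lemma twins_trans_eq (a : R) u v :
  a = (deg e u + 1)%:R^-1 -> e u v -> nbhd e u :\ v = nbhd e v :\ u ->
  trans e a u = trans e a v.
Proof.
move=> a_def euv nbhd_uv; have evu : e v u by rewrite e_sym.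
have uv : u != v by apply: contraTneq euv => ->; rewrite e_irr.
have deg_uv : deg e v = deg e u.
  by rewrite /deg (cardsD1 u) (cardsD1 v (nbhd e u)) nbhd_uv !inE euv evu.
have lazy_hop : (1 - a) / (deg e u)%:R = a.
  have deg_neq0 : (deg e u)%:R != 0 :> R by rewrite pnatr_eq0 eqn0Ngt deg_gt0.
  have deg1_neq0 : (deg e u)%:R + 1 != 0 :> R by rewrite natr1 pnatr_eq0.
  by rewrite a_def natrD; field; rewrite deg_neq0 deg1_neq0.
apply: funext => y; rewrite /trans deg_uv.
case: (eqVneq u y) => [<-|uy]; first by rewrite eq_sym (negbTE uv) evu lazy_hop.
case: (eqVneq v y) => [<-|vy]; first by rewrite euv lazy_hop.
move/setP: nbhd_uv => /(_ y); rewrite !inE.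
by rewrite eq_sym (negbTE vy) [y == u]eq_sym (negbTE uy) /= => ->.
Qed.

Lemma trans_rows_eq (a : R) u v :
  trans e a u = trans e a v <->
  [\/ a = 0 /\ nbhd e u = nbhd e v,
      [/\ a = (deg e u + 1)%:R^-1, e u v & nbhd e u :\ v = nbhd e v :\ u]
    | u = v].
Proof.
split=> [rows|[[-> /eq_nbhd_trans0]|[]|<-]] //; last exact: twins_trans_eq.
have [<-|uv] := eqVneq u v; first exact: Or33.
have row y : trans e a u y = trans e a v y by rewrite rows.
have at_u : a = if e v u then (1 - a) / (deg e v)%:R else 0.
  by move: (row u); rewrite /trans eqxx eq_sym (negbTE uv).
have at_v : (if e u v then (1 - a) / (deg e u)%:R else 0) = a.
  by move: (row v); rewrite /trans eqxx (negbTE uv).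
have [a0|a_neq0] := eqVneq a 0.
  apply: Or31; split=> //; apply/setP => y; rewrite !inE.
  by rewrite -[e u y]negbK -[e v y]negbK -!trans0_eq0 -a0 row.
have evu : e v u by apply: contraNT a_neq0 => /negbTE nevu; rewrite at_u nevu.
have euv : e u v by rewrite e_sym.
rewrite evu in at_u; rewrite euv in at_v.
apply: Or32; split=> //.
  have deg_neq0 : (deg e u)%:R != 0 :> R by rewrite pnatr_eq0 eqn0Ngt deg_gt0.
  apply: (mulIf (_ : (deg e u + 1)%:R != 0)); first by rewrite addn1 pnatr_eq0.
  rewrite mulVf; last by rewrite addn1 pnatr_eq0.
  by rewrite addn1 -natr1 mulrDr mulr1 -{1}at_v divfK // subrK.
apply/setP => y; rewrite !inE.
have [->|yv] := eqVneq y v; first by rewrite e_irr andbF.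
have [->|yu] /= := eqVneq y u; first by rewrite e_irr.
move: (row y); rewrite /trans [u == y]eq_sym (negbTE yu) [v == y]eq_sym (negbTE yv).
rewrite at_v -at_u; case: (e u y); case: (e v y) => // /eqP.
  by rewrite (negbTE a_neq0).
by rewrite eq_sym (negbTE a_neq0).
Qed.

Lemma stationary_lazy_rows_neq (a b : R) u v :
  0 <= a < b -> walk_step 0 (trans e a u) = trans e a u -> trans e a u <> trans e b v.
Proof.
move=> /andP [a_ge0 lt_ab] stationary rows.
have row y : trans e a u y = trans e b v y by rewrite rows.
have ab : a != b by rewrite lt_eqF.
have b_neq0 : b != 0 by rewrite gt_eqF // (le_lt_trans a_ge0 lt_ab).
have uv : u != v by apply: contra_neq ab => uv; move: (row u); rewrite uv /trans !eqxx.
have at_u : a = if e v u then (1 - b) / (deg e v)%:R else 0.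
  by move: (row u); rewrite /trans eqxx eq_sym (negbTE uv).
have at_v : (if e u v then (1 - a) / (deg e u)%:R else 0) = b.
  by move: (row v); rewrite /trans eqxx (negbTE uv).
have euv : e u v by apply: contraNT b_neq0 => /negbTE neuv; rewrite -at_v neuv.
have evu : e v u by rewrite e_sym.
rewrite evu in at_u; rewrite euv in at_v.
have nbhd_u : nbhd e u = [set v]%SET.
  apply/setP => x; rewrite !inE; apply/idP/eqP => [eux|->//].
  apply/eqP; apply: contraT => xv.
  have ux : u != x by apply: contraTneq eux => <-; rewrite e_irr.
  move: (row x); rewrite /trans (negbTE ux) eq_sym (negbTE xv) eux at_v.
  case: (e v x) => [|/eqP]; last by rewrite (negbTE b_neq0).
  by rewrite -at_u => /eqP; rewrite eq_sym (negbTE ab).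
have deg_u : deg e u = 1%N by rewrite /deg nbhd_u cards1.
have deg_v_neq0 : (deg e v)%:R^-1 != 0 :> R.
  by rewrite invr_eq0 pnatr_eq0 eqn0Ngt deg_gt0.
have : walk_step 0 (trans e a u) u = b / (deg e v)%:R.
  rewrite /walk_step (bigD1 v) //= big1 ?addr0 => [|x xv].
    by rewrite trans0E evu {1}/trans (negbTE uv) euv at_v.
  have : x \notin nbhd e u by rewrite nbhd_u inE.
  by rewrite inE trans0E e_sym => /negbTE ->; rewrite mulr0.
rewrite stationary {1}/trans eqxx at_u => /(mulIf deg_v_neq0) b_half.
have a_half : 1 - a = b by rewrite -at_v deg_u divr1.
by move/eqP: ab; apply; lra.
Qed.

Lemma eq_walk_dist2_laziness (a b : R) u v N :
  0 <= a <= b -> walk_dist e a u N = walk_dist e b v N ->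
  walk_dist e a u N.+1 = walk_dist e b v N.+1 -> a = b.
Proof.
case/andP=> a_ge0 le_ab walks_N walks_SN.
have [//|neq_ab] := eqVneq a b; exfalso.
set m := walk_dist e a u N.
have step_m : walk_step a m = walk_step b m by rewrite [in RHS]/m walks_N.
have m_fixed := walk_step_fixed neq_ab step_m.
have trans_u : trans e a u = m := walk_dist_fixed (m_fixed a) (erefl m).
have trans_v : trans e b v = m by apply: (walk_dist_fixed (m_fixed b)); rewrite /m walks_N.
apply: (stationary_lazy_rows_neq (u := u) (v := v) (a := a) (b := b)).
- by rewrite a_ge0 lt_neqAle neq_ab.
- by rewrite trans_u m_fixed.
- by rewrite trans_u trans_v.
Qed.

End LazyWalk.

Theorem theorem6p6 (R : realType) (T : finType) (e : rel T) (u v : T) (a b : R) :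
  simple_graph e -> connected_graph e -> (1 < #|T|)%N ->
  0 <= a -> a <= b -> b <= 1 ->
  (W e u v a b) @ \oo --> 0%R ->
  (eventually_constant (W e u v a b) <->
   [\/ a = 0 /\ b = 0 /\ nbhd e u = nbhd e v,
       [/\ a = (deg e u + 1)%:R^-1, b = (deg e u + 1)%:R^-1, e u v
         & nbhd e u :\ v = nbhd e v :\ u]
     | a = b /\ u = v]).
Proof.
move=> [e_sym e_irr] e_conn T_gt1 a_ge0 le_ab b_le1 W_cvg0.
have deg_gt0 x : (0 < deg e x)%N by exact: connected_deg_gt0.
have a01 : 0 <= a <= 1 by rewrite a_ge0 (le_trans le_ab).
have b01 : 0 <= b <= 1 by rewrite b_le1 (le_trans a_ge0).
have walk_distribution (g : R) w k : 0 <= g <= 1 -> is_distribution (walk_dist e g w k).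
  exact: walk_dist_distribution.
have trans_rowsP := trans_rows_eq e_sym e_irr deg_gt0.
split=> [[N W_const]|].
  have eq_walks k : (N <= k)%N -> walk_dist e a u k = walk_dist e b v k.
    move=> le_Nk; apply: (wasserstein_eq0 (e := e)); [exact: walk_distribution..|].
    by move: (W_const k le_Nk); rewrite (eventually_constant_cvg0 W_cvg0 W_const).
  have eq_ab : a = b.
    apply: (eq_walk_dist2_laziness e_sym e_irr deg_gt0 _ (eq_walks N _) (eq_walks N.+1 _)) => //.
    by rewrite a_ge0.
  subst b; have := eq_walk_dist_trans e_sym deg_gt0 (eq_walks N (leqnn N)).
  case/trans_rowsP => [[a0 nbhd_uv]|[a_def euv nbhd_uv]|uv].
  - by apply: Or31.
  - by apply: Or32.
  - by apply: Or33.
move=> cases; have [eq_ab rows] : a = b /\ trans e a u = trans e a v.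
  case: cases => [[-> [-> nbhd_uv]]|[-> -> euv nbhd_uv]|[-> ->] //]; split=> //.
  - by apply/trans_rowsP; apply: Or31.
  - by apply/trans_rowsP; apply: Or32.
subst b; have walk_ge0 k y : 0 <= walk_dist e a v k y.
  by case: (walk_distribution a v k a01).
exists 1%N => -[|k] // _.
by rewrite /W !(eq_trans_walk_dist _ rows) !wasserstein_xx.
Qed.
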